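(* For every $\kappa,\lambda\in(0,1)$, the measure rule LB-NxM$(\kappa,\lambda)$ is $\zeta$-slick for $\zeta=1/(\kappa n)$: for all neighboring samples $S,S'\in(\mathcal{X}\times\{\pm1\})^n$ and every finite sequence of hypotheses $H=(h_1,\dots,h_t)$ with $h_j:\mathcal X\to[-1,1]$, letting $\hat\mu$ and $\hat\mu'$ be the distributions output by LB-NxM on $(S,H)$ and $(S',H)$, we have $\Delta(\hat\mu,\hat\mu')\le\frac{1}{\kappa n}$.
   Context: Neighboring samples differ in at most one position. $\Delta(Y,Z)=\max_A|\Pr[Y\in A]-\Pr[Z\in A]|$ is statistical distance. Measures on $[n]$: $\mu:[n]\to[0,1]$, $|\mu|=\sum_i\mu(i)$, $d(\mu)=|\mu|/n$, $\hat\mu=\mu/|\mu|$, $\mathrm{KL}(\mu_1\|\mu_2)=\sum_i\mu_1(i)\log(\mu_1(i)/\mu_2(i))+\mu_2(i)-\mu_1(i)$, $\Gamma_\kappa=\{\mu:d(\mu)\ge\kappa\}$, $\Pi_{\Gamma_\kappa}\tilde\mu=\arg\min_{\mu\in\Gamma_\kappa}\mathrm{KL}(\mu\|\tilde\mu)$. LB-NxM$(\kappa,\lambda)$ on $S=((x_i,y_i))_{i=1}^n$ and $h_1,\dots,h_t$: $\ell_j(i)=1-\frac12|h_j(x_i)-y_i|$, $\tilde\mu(i)=\kappa e^{-\lambda\sum_{j=1}^t\ell_j(i)}$, $\mu=\Pi_{\Gamma_\kappa}\tilde\mu$, output $\hat\mu$. *)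

From HB Require Import structures.
From mathcomp Require Import all_boot all_order all_algebra.
From mathcomp Require Import all_classical all_reals.
From mathcomp Require Import sequences exp.
Set Implicit Arguments. Unset Strict Implicit. Unset Printing Implicit Defensive.
Import Order.TTheory GRing.Theory Num.Theory.
Local Open Scope ring_scope.

Section LBNxM.
Variables (R : realType) (n : nat).

Definition is_measure (mu : 'I_n -> R) : Prop := forall i, 0 <= mu i <= 1.

Definition mass (mu : 'I_n -> R) : R := \sum_(i < n) mu i.
Definition density (mu : 'I_n -> R) : R := mass mu / n%:R.
Definition normalize (mu : 'I_n -> R) : 'I_n -> R := fun i => mu i / mass mu.

(* KL(mu1 || mu2) = sum_i mu1 i log(mu1 i / mu2 i) + mu2 i - mu1 i
   (with the convention 0 log 0 = 0, which holds since ln 0 = 0 here). *)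
Definition KL (mu1 mu2 : 'I_n -> R) : R :=
  \sum_(i < n) (mu1 i * ln (mu1 i / mu2 i) + mu2 i - mu1 i).

Definition Gamma (kappa : R) (mu : 'I_n -> R) : Prop :=
  is_measure mu /\ kappa <= density mu.

Definition is_KL_projection (kappa : R) (mut mu : 'I_n -> R) : Prop :=
  Gamma kappa mu /\ forall nu, Gamma kappa nu -> KL mu mut <= KL nu mut.

Variable X : Type.

Definition loss (h : X -> R) (z : X * R) : R := 1 - `|h z.1 - z.2| / 2.

Definition mutilde (kappa lambda : R) (S : 'I_n -> X * R) (H : seq (X -> R))
  : 'I_n -> R :=
  fun i => kappa * expR (- (lambda * \sum_(h <- H) loss h (S i))).

Definition LB_NxM_output (kappa lambda : R) (S : 'I_n -> X * R)
  (H : seq (X -> R)) (muhat : 'I_n -> R) : Prop :=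
  exists mu, is_KL_projection kappa (mutilde kappa lambda S H) mu /\
             muhat = normalize mu.

Definition is_sample (S : 'I_n -> X * R) : Prop :=
  forall i, (S i).2 = 1 \/ (S i).2 = -1.

Definition neighboring (S S' : 'I_n -> X * R) : Prop :=
  exists k : 'I_n, forall i, i != k -> S i = S' i.

Definition is_hypothesis (h : X -> R) : Prop := forall x, -1 <= h x <= 1.

End LBNxM.

Definition stat_dist (R : realType) (n : nat) (p q : 'I_n -> R) : R :=
  \big[Num.max/0]_(A : {set 'I_n}) `|\sum_(i in A) p i - \sum_(i in A) q i|.

From HB Require Import structures.
From mathcomp Require Import all_boot all_order all_algebra.
From mathcomp Require Import all_classical all_reals.
From mathcomp Require Import sequences exp topology normedtype.
From mathcomp Require Import ring lra.
Import Order.TTheory GRing.Theory Num.Theory numFieldNormedType.Exports.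
Local Open Scope ring_scope.

(* Since mutilde > 0, the KL projection of mutilde onto Gamma_kappa is the
   capped rescaling i |-> min(1, c * mutilde i), where c >= 1 and either c = 1
   or the capped measure has mass exactly kappa * n: by the three-point
   identity for KL, a competitor nu in Gamma_kappa pays KL(nu || mu) plus a
   first-order term sum_i (nu i - mu i) ln (mu i / mutilde i), which is at least
   (|nu| - |mu|) ln c >= 0.
   Neighbouring samples change mutilde in a single coordinate k.  The output
   with the larger scale has the smaller mass, so off k one normalised output
   dominates the other coordinatewise; hence their statistical distance is at
   most one coordinate of a normalised measure of mass >= kappa * n, i.e. at
   most 1 / (kappa * n).  The ranges of the labels and of the hypotheses, and
   the value of lambda, play no role. *)

Set Implicit Arguments. Unset Strict Implicit.

Section KLSummand.
Variable R : realType.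

Lemma ln_lt_subr1 (z : R) : 0 < z -> z != 1 -> ln z < z - 1.
Proof.
move=> z_gt0 z_neq1; have := @expR_gt1Dx R (ln z).
by rewrite lnK ?posrE // ln_eq0 // z_neq1 => /(_ isT); lra.
Qed.

Lemma KL_summand_gt0 (nu x : R) :
  0 <= nu -> 0 < x -> nu != x -> 0 < nu * ln (nu / x) + x - nu.
Proof.
rewrite le_eqVlt => /orP[/eqP <- x_gt0 _|nu_gt0 x_gt0 nu_neq_x].
  by rewrite mul0r; lra.
have x_div_nu_neq1 : x / nu != 1.
  by apply: contra nu_neq_x => /eqP/(divr1_eq) ->.
have := ln_lt_subr1 (divr_gt0 x_gt0 nu_gt0) x_div_nu_neq1.
rewrite !ln_div ?posrE // -(ltr_pM2l nu_gt0).
have -> : nu * (x / nu - 1) = x - nu by rewrite mulrBr mulr1 mulrC divfK ?gt_eqF.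
lra.
Qed.

Lemma KL_summand_ge0 (nu x : R) : 0 <= nu -> 0 < x -> 0 <= nu * ln (nu / x) + x - nu.
Proof.
move=> nu_ge0 x_gt0; have [->|nu_neq_x] := eqVneq nu x.
  by rewrite divff ?gt_eqF // ln1 mulr0; lra.
exact/ltW/KL_summand_gt0.
Qed.

End KLSummand.

Section KLProjection.
Variables (R : realType) (n : nat).
Implicit Types (kappa c : R) (a nu x mu : 'I_n -> R).

Lemma le_density kappa mu :
  (0 < n)%N -> (kappa <= density mu) = (kappa * n%:R <= mass mu).
Proof. by move=> n_gt0; rewrite /density ler_pdivlMr // ltr0n. Qed.

Lemma KL_le0_eq nu x : (forall i, 0 <= nu i) -> (forall i, 0 < x i) ->
  KL nu x <= 0 -> nu = x.
Proof.
move=> nu_ge0 x_gt0 KL_le0; apply: funext => i; apply/eqP; apply: contraT => neq.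
have := KL_summand_gt0 (nu_ge0 i) (x_gt0 i) neq.
have : 0 <= \sum_(j | j != i) (nu j * ln (nu j / x j) + x j - nu j).
  by apply: sumr_ge0 => j _; apply: KL_summand_ge0.
by move: KL_le0; rewrite /KL (bigD1 i) //=; lra.
Qed.

Lemma KL_three_point nu x a :
  (forall i, 0 <= nu i) -> (forall i, 0 < x i) -> (forall i, 0 < a i) ->
  KL nu a = KL nu x + KL x a + \sum_i (nu i - x i) * ln (x i / a i).
Proof.
move=> nu_ge0 x_gt0 a_gt0; rewrite /KL -!big_split /=; apply: eq_bigr => i _.
move: (nu_ge0 i); rewrite le_eqVlt => /orP[/eqP <-|nu_gt0].
  by rewrite !mul0r; ring.
have -> : ln (nu i / a i) = ln (nu i / x i) + ln (x i / a i).
  by rewrite -lnM ?posrE ?divr_gt0 // mulrA divfK // gt_eqF.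
ring.
Qed.

Definition capped c a : 'I_n -> R := fun i => Num.min 1 (c * a i).

Lemma capped_gt0 c a i : 0 < c -> 0 < a i -> 0 < capped c a i.
Proof. by move=> c_gt0 a_gt0; rewrite lt_min ltr01 mulr_gt0. Qed.

Lemma capped_measure c a : 0 < c -> (forall i, 0 < a i) -> is_measure (capped c a).
Proof. by move=> c_gt0 a_gt0 i; rewrite ge_min lexx ltW ?capped_gt0. Qed.

Definition projection_scale kappa c a : Prop :=
  [/\ 1 <= c, Gamma kappa (capped c a) & c = 1 \/ mass (capped c a) = kappa * n%:R].

(* Uncapped coordinates have ratio exactly c; capped ones have v - 1 <= 0 and
   ratio 1 / a i < c. *)
Lemma capped_log_ratio_ge c a i (v : R) : 1 <= c -> 0 < a i -> v <= 1 ->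
  (v - capped c a i) * ln c <= (v - capped c a i) * ln (capped c a i / a i).
Proof.
move=> c_ge1 a_gt0 v_le1; rewrite /capped.
have [ca_le1|ca_gt1] := leP (c * a i) 1; first by rewrite mulfK ?gt_eqF.
have : ln (1 / a i) <= ln c.
  by rewrite ler_ln ?posrE ?divr_gt0 ?ler_pdivrMr ?(ltW ca_gt1) //; lra.
rewrite div1r; nra.
Qed.

Lemma capped_first_order kappa c a nu : (0 < n)%N -> (forall i, 0 < a i) ->
  projection_scale kappa c a -> Gamma kappa nu ->
  0 <= \sum_i (nu i - capped c a i) * ln (capped c a i / a i).
Proof.
move=> n_gt0 a_gt0 [c_ge1 _ tight] [nu_measure nu_dense].
apply: le_trans (_ : \sum_i (nu i - capped c a i) * ln c <= _).
  rewrite -mulr_suml sumrB -/(mass nu) -/(mass (capped c a)).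
  case: tight => [->|->]; first by rewrite ln1 mulr0.
  by rewrite mulr_ge0 ?ln_ge0 // subr_ge0 -le_density.
apply: ler_sum => i _; apply: capped_log_ratio_ge => //.
by case/andP: (nu_measure i).
Qed.

Lemma KL_projection_capped kappa c a mu : (0 < n)%N -> (forall i, 0 < a i) ->
  projection_scale kappa c a -> is_KL_projection kappa a mu -> mu = capped c a.
Proof.
move=> n_gt0 a_gt0 scale [mu_Gamma mu_min]; have [c_ge1 capped_Gamma _] := scale.
have mu_ge0 i : 0 <= mu i by case/andP: (mu_Gamma.1 i).
have capped_pos i : 0 < capped c a i by apply: capped_gt0 (a_gt0 i); lra.
apply: KL_le0_eq => //.
have := mu_min _ capped_Gamma; rewrite (KL_three_point mu_ge0 capped_pos a_gt0).
by have := capped_first_order n_gt0 a_gt0 scale mu_Gamma; lra.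
Qed.

Lemma continuous_mass_capped a : continuous (fun c => mass (capped c a)).
Proof.
move=> c; apply: (cvg_big add_continuous) => i _.
apply: (@continuous_min _ _ (fun=> 1) (fun c => c * a i)); first exact: cst_continuous.
by apply: continuousM; [exact: cvg_id | exact: cst_continuous].
Qed.

Lemma capped_saturates a : (forall i, 0 < a i) ->
  exists2 C, 1 <= C & mass (capped C a) = n%:R.
Proof.
move=> a_gt0; pose C := \big[Num.max/1]_i (a i)^-1.
exists C; first exact: bigmax_ge_id.
rewrite /mass (eq_bigr (fun=> 1)) ?sumr_const ?card_ord // => i _.
by rewrite /capped min_l // -ler_pdivrMr // div1r le_bigmax.
Qed.

Lemma projection_scale_exists kappa a : (0 < n)%N -> 0 < kappa -> kappa <= 1 ->
  (forall i, 0 < a i) -> exists c, projection_scale kappa c a.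
Proof.
move=> n_gt0 kappa_gt0 kappa_le1 a_gt0.
have Gamma_capped c : 0 < c -> kappa * n%:R <= mass (capped c a) ->
    Gamma kappa (capped c a).
  by move=> c_gt0 dense; split; [exact: capped_measure | rewrite le_density].
have [dense|sparse] := leP (kappa * n%:R) (mass (capped 1 a)).
  by exists 1; split; [|apply: Gamma_capped|left].
have [C C_ge1 mass_C] := capped_saturates a_gt0.
have kn_le_n : kappa * n%:R <= n%:R by apply: ler_piMl.
have [|c c_in mass_c] := IVT (v := kappa * n%:R) C_ge1
  (continuous_subspaceT (continuous_mass_capped (a := a))).
  by rewrite mass_C min_l ?max_r; lra.
move: c_in; rewrite in_itv /= => /andP[c_ge1 _].
by exists c; split; [|apply: Gamma_capped; [lra|rewrite mass_c]|right].
Qed.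

Lemma projection_scale_mass_le kappa c c' a a' : (0 < n)%N ->
  projection_scale kappa c a -> projection_scale kappa c' a' -> c < c' ->
  mass (capped c' a') <= mass (capped c a).
Proof.
move=> n_gt0 [c_ge1 [_ dense] _] [_ _ [c'_eq1|->]] lt_cc'; first lra.
by rewrite -le_density.
Qed.

End KLProjection.

Section StatDist.
Variables (R : realType) (n : nat).
Implicit Types (p q mu : 'I_n -> R).

Lemma stat_distC p q : stat_dist p q = stat_dist q p.
Proof. by apply: eq_bigr => A _; rewrite distrC. Qed.

(* Off k, the mass that q lacks relative to p is what q puts in excess at k. *)
Lemma stat_dist_le_dominated p q (k : 'I_n) : 0 <= p k -> 0 <= q k ->
  \sum_i p i = \sum_i q i -> (forall i, i != k -> q i <= p i) ->
  stat_dist p q <= q k.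
Proof.
move=> pk_ge0 qk_ge0 sum_pq q_le_p.
have excess (P : pred 'I_n) : \sum_(i | P i) (q i - p i) <= q k.
  have [Pk|nPk] := boolP (P k).
    rewrite (bigD1 k) //=.
    have : \sum_(i | P i && (i != k)) (q i - p i) <= 0.
      by apply: sumr_le0 => i /andP[_ /q_le_p]; rewrite subr_le0.
    lra.
  have : \sum_(i | P i) (q i - p i) <= 0.
    apply: sumr_le0 => i Pi; rewrite subr_le0 q_le_p //.
    by apply: contraNneq nPk => <-.
  lra.
apply: bigmax_le => // A _; rewrite distrC -sumrB ler_norml.
have := excess (mem A); have := excess (predC (mem A)).
have : \sum_i (q i - p i) = 0 by rewrite sumrB sum_pq subrr.
rewrite (bigID (mem A)) /=; lra.
Qed.

Lemma normalize_ge0 mu : is_measure mu -> 0 < mass mu -> forall i, 0 <= normalize mu i.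
Proof.
move=> mu_measure mass_gt0 i.
by apply: divr_ge0; [case/andP: (mu_measure i) | exact: ltW].
Qed.

Lemma sum_normalize mu : mass mu != 0 -> \sum_i normalize mu i = 1.
Proof. by move=> mass_neq0; rewrite -mulr_suml divff. Qed.

Lemma normalize_le mu (m : R) : is_measure mu -> 0 < m -> m <= mass mu ->
  forall i, normalize mu i <= m^-1.
Proof.
move=> mu_measure m_gt0 m_le_mass i.
have mass_gt0 : 0 < mass mu by apply: lt_le_trans m_le_mass.
apply: le_trans (_ : (mass mu)^-1 <= _); last by rewrite lef_pV2 ?posrE.
by apply: ler_piMl; [rewrite invr_ge0 ltW | case/andP: (mu_measure i)].
Qed.

End StatDist.

Section Neighbours.
Variables (R : realType) (n : nat).
Implicit Types (kappa c : R) (a : 'I_n -> R).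

Lemma normalize_capped_le c c' a a' k : 0 < c' -> c' <= c -> (forall i, 0 < a i) ->
  (forall i, i != k -> a' i = a i) ->
  0 < mass (capped c a) -> mass (capped c a) <= mass (capped c' a') ->
  forall i, i != k -> normalize (capped c' a') i <= normalize (capped c a) i.
Proof.
move=> c'_gt0 le_c'c a_gt0 eq_a mass_gt0 le_mass i ik.
have capped_le : capped c' a' i <= capped c a i.
  by rewrite /capped eq_a // le_min ge_min lexx /= ge_min ler_wpM2r ?orbT // ltW.
have capped_ge0 : 0 <= capped c' a' i by apply/ltW/capped_gt0; rewrite ?eq_a.
rewrite /normalize; apply: le_trans (_ : capped c' a' i / mass (capped c a) <= _).
  by rewrite ler_wpM2l // lef_pV2 ?posrE // (lt_le_trans mass_gt0).
by rewrite ler_wpM2r // invr_ge0 ltW.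
Qed.

Lemma stat_dist_capped_neighbours kappa c c' a a' k : (0 < n)%N -> 0 < kappa ->
  (forall i, 0 < a i) -> (forall i, 0 < a' i) -> (forall i, i != k -> a' i = a i) ->
  projection_scale kappa c a -> projection_scale kappa c' a' ->
  stat_dist (normalize (capped c a)) (normalize (capped c' a')) <= 1 / (kappa * n%:R).
Proof.
move=> n_gt0 kappa_gt0.
wlog [le_c'c le_mass] : c c' a a' / c' <= c /\ mass (capped c a) <= mass (capped c' a').
  move=> main a_gt0 a'_gt0 eq_a scale scale'.
  have eq_a' i : i != k -> a i = a' i by move/eq_a.
  case: (ltgtP c c') => [lt_cc'|lt_c'c|eq_cc'].
  - rewrite stat_distC; apply: main => //; split; first exact: ltW.
    exact: projection_scale_mass_le n_gt0 scale scale' lt_cc'.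
  - apply: main => //; split; first exact: ltW.
    exact: projection_scale_mass_le n_gt0 scale' scale lt_c'c.
  - have [le_mass|lt_mass] := leP (mass (capped c a)) (mass (capped c' a')).
      by apply: main => //; split; first rewrite eq_cc'.
    by rewrite stat_distC; apply: main => //; split; [rewrite eq_cc' | exact: ltW].
move=> a_gt0 a'_gt0 eq_a [_ [measure dense] _] [c'_ge1 [measure' dense'] _].
rewrite !le_density // in dense dense'.
have kn_gt0 : 0 < kappa * n%:R by rewrite mulr_gt0 ?ltr0n.
have mass_gt0 := lt_le_trans kn_gt0 dense.
have mass'_gt0 := lt_le_trans kn_gt0 dense'.
rewrite div1r; apply: le_trans (normalize_le measure' kn_gt0 dense' k).
apply: stat_dist_le_dominated; rewrite ?normalize_ge0 //.
  by rewrite !sum_normalize ?gt_eqF.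
by apply: normalize_capped_le => //; lra.
Qed.

End Neighbours.

Theorem mainTheorem4 (R : realType) (X : Type) (n : nat) (kappa lambda : R)
  (hn : (0 < n)%N)
  (hk0 : 0 < kappa) (hk1 : kappa < 1) (hl0 : 0 < lambda) (hl1 : lambda < 1)
  (S S' : 'I_n -> X * R) (H : seq (X -> R))
  (hS : is_sample S) (hS' : is_sample S') (hSS' : neighboring S S')
  (hH : forall h, h \in H -> is_hypothesis h)
  (muhat muhat' : 'I_n -> R) :
  LB_NxM_output kappa lambda S H muhat ->
  LB_NxM_output kappa lambda S' H muhat' ->
  stat_dist muhat muhat' <= 1 / (kappa * n%:R).
Proof.
move=> [mu [proj ->]] [mu' [proj' ->]].
have [k eq_S] := hSS'.
have mutilde_gt0 (S0 : 'I_n -> X * R) i : 0 < mutilde kappa lambda S0 H i.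
  by rewrite mulr_gt0 ?expR_gt0.
have [c scale] := projection_scale_exists hn hk0 (ltW hk1) (mutilde_gt0 S).
have [c' scale'] := projection_scale_exists hn hk0 (ltW hk1) (mutilde_gt0 S').
rewrite (KL_projection_capped hn (mutilde_gt0 S) scale proj).
rewrite (KL_projection_capped hn (mutilde_gt0 S') scale' proj').
apply: (stat_dist_capped_neighbours (k := k)) => // i /eq_S.
by rewrite /mutilde => ->.
Qed.
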